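(* Let $\mathbb N$ be a symmetric directed graph on $m$ vertices (no self-arcs) with arcs enumerated $e_1,\dots,e_d$, each arc $e_k$ carrying a real matrix $C_{e_k}$ with $n$ columns and orthonormal rows. Let $\mathbb G$ be a symmetric spanning subgraph of $\mathbb N$, $J_{\mathbb G}$ its spanning incidence matrix, $w_1,\dots,w_d$ its spanning Metropolis weights, $\bar J_{\mathbb G}=J_{\mathbb G}\otimes I_n$, and $\Lambda_{\mathbb G}=\operatorname{blockdiag}(w_1C_{e_1}'C_{e_1},\dots,w_dC_{e_d}'C_{e_d})$. Then all eigenvalues of the symmetric matrix $A_{\mathbb G}=I_{mn}-\tfrac12\bar J_{\mathbb G}\Lambda_{\mathbb G}\bar J_{\mathbb G}'$ lie in $(-1,1]$. If moreover $\mathbb G=\mathbb N$ and $\bar{\mathbb N}$ is well-configured, then $A_{\mathbb N}$ has exactly $n$ eigenvalues equal to $1$ (with multiplicity) and all other eigenvalues lie in $(-1,1)$.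
   Context: A directed graph is symmetric if whenever $(i,j)$ is an arc so is $(j,i)$. Spanning incidence matrix: $J_{\mathbb G}\in\mathbb R^{m\times d}$ whose column $k$ has $+1$ in row $i$ and $-1$ in row $j$ if $e_k=(j,i)$ is an arc of $\mathbb G$, and is zero if $e_k$ is not an arc of $\mathbb G$ (for $\mathbb G=\mathbb N$ this is the ordinary incidence matrix). Spanning Metropolis weights: if $e_k=(j,i)$ is an arc of $\mathbb G$, $w_k=1/(1+\max\{\bar d_i,\bar d_j\})$ where $\bar d_v$ is the number of neighbors of $v$ in $\mathbb G$; otherwise $w_k=0$. $'$ denotes transpose. $\bar{\mathbb N}$ is well-configured if for all $x_1,\dots,x_m\in\mathbb R^n$, $C_{ji}x_i=C_{ji}x_j$ for every arc $(j,i)$ of $\mathbb N$ implies $x_1=\cdots=x_m$. *)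

From HB Require Import structures.
From mathcomp Require Import all_boot all_order all_algebra.
From mathcomp Require Import reals.
From mathcomp.real_closed Require Import mxtens.
Set Implicit Arguments. Unset Strict Implicit. Unset Printing Implicit Defensive.
Import Order.TTheory GRing.Theory Num.Theory.
Local Open Scope ring_scope.

(* A directed graph on vertices 'I_m whose arcs are enumerated e_1..e_d by
   e : 'I_d -> 'I_m * 'I_m ; e k = (j, i) means arc e_k goes from j to i.
   A spanning subgraph G is given by the set g of arcs of N that belong to G. *)

Definition nbr_count (m d : nat) (e : 'I_d -> 'I_m * 'I_m) (g : pred 'I_d)
    (v : 'I_m) : nat :=
  #|[set u : 'I_m | [exists k : 'I_d, g k && (e k == (u, v))]]|.

Definition metropolis_w (R : realType) (m d : nat) (e : 'I_d -> 'I_m * 'I_m)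
    (g : pred 'I_d) (k : 'I_d) : R :=
  if g k then
    1 / (1 + (maxn (nbr_count e g (e k).2) (nbr_count e g (e k).1))%:R)
  else 0.
Arguments metropolis_w {R m d} e g k.

Definition span_incidence (R : realType) (m d : nat) (e : 'I_d -> 'I_m * 'I_m)
    (g : pred 'I_d) : 'M[R]_(m, d) :=
  \matrix_(v, k)
    (if g k then
       (if v == (e k).2 then 1 else if v == (e k).1 then -1 else 0)
     else 0).
Arguments span_incidence {R m d} e g.

Definition Lambda_mx (R : realType) (m n d : nat) (e : 'I_d -> 'I_m * 'I_m)
    (g : pred 'I_d) (p : 'I_d -> nat) (C : forall k : 'I_d, 'M[R]_(p k, n))
    : 'M[R]_(d * n) :=
  \sum_(k < d) (delta_mx k k *t (metropolis_w e g k *: ((C k)^T *m C k))).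

Definition A_mx (R : realType) (m n d : nat) (e : 'I_d -> 'I_m * 'I_m)
    (g : pred 'I_d) (p : 'I_d -> nat) (C : forall k : 'I_d, 'M[R]_(p k, n))
    : 'M[R]_(m * n) :=
  let Jbar := span_incidence e g *t (1%:M : 'M[R]_n) in
  1%:M - (1 / 2) *: (Jbar *m Lambda_mx e g C *m Jbar^T).

Definition well_configured (R : realType) (m n d : nat) (e : 'I_d -> 'I_m * 'I_m)
    (p : 'I_d -> nat) (C : forall k : 'I_d, 'M[R]_(p k, n)) : Prop :=
  forall x : 'I_m -> 'cV[R]_n,
    (forall k : 'I_d, C k *m x (e k).2 = C k *m x (e k).1) ->
    forall i j : 'I_m, x i = x j.

From HB Require Import structures.
From mathcomp Require Import all_boot all_order all_algebra.
From mathcomp Require Import reals.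
From mathcomp.real_closed Require Import mxtens.
From mathcomp Require Import ring lra.
Set Implicit Arguments. Unset Strict Implicit. Unset Printing Implicit Defensive.
Import Order.TTheory GRing.Theory Num.Theory.
Local Open Scope ring_scope.

(* Writing Y_k for (column k of J) ⊗ C_k', the matrix Jbar Λ Jbar' equals
   Σ_k w_k Y_k Y_k', so it is positive semidefinite and every eigenvalue of A is
   at most 1.  If the row vector v has blocks x_1, ..., x_m and e_k = (j, i), the
   orthonormality of the rows of C_k (Bessel's inequality) gives
   |v Y_k|² ≤ |x_i - x_j|² ≤ 2 (|x_i|² + |x_j|²); since the Metropolis weights of
   the arcs entering (or leaving) a vertex of degree D sum to at most
   D/(1+D) ≤ m/(1+m), this yields v Jbar Λ Jbar' v' ≤ 4 m/(1+m) |v|² < 4 |v|²,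
   hence every eigenvalue exceeds -1.
   As A is symmetric, the multiplicity of 1 is the dimension of its eigenspace,
   the kernel of the quadratic form.  When all weights are positive, a vector of
   this kernel satisfies C_k x_i = C_k x_j on every arc, so by well-configuredness
   it is a consensus vector (1, ..., 1) ⊗ x; these form an n-dimensional space. *)

Lemma char_poly_conj (F : fieldType) n (P A : 'M[F]_n) :
  P \in unitmx -> char_poly (invmx P *m A *m P) = char_poly A.
Proof.
move=> P_unit; rewrite /char_poly /char_poly_mx.
have -> : 'X%:M - map_mx polyC (invmx P *m A *m P) =
    map_mx polyC (invmx P) *m ('X%:M - map_mx polyC A) *m map_mx polyC P.
  rewrite mulmxBr mulmxBl !map_mxM; congr (_ - _).
  by rewrite mul_mx_scalar -scalemxAl -map_mxM mulVmx // map_mx1 scalemx1.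
rewrite !det_mulmx !det_map_mx mulrC mulrA -rmorphM -det_mulmx mulmxV //.
by rewrite det1 rmorph1 mul1r.
Qed.

(* In the basis formed by the rows of [E] and [G], [S] is [diag(a I_r, S')]. *)
Lemma mup_char_poly_block (F : fieldType) N r s (S : 'M[F]_N)
    (E : 'M_(r, N)) (G : 'M_(s, N)) (S' : 'M_s) (a : F) :
  (r + s)%N = N -> E *m S = a *: E -> G *m S = S' *m G ->
  \rank (col_mx E G) = N -> ~~ root (char_poly S') a ->
  mup a (char_poly S) = r.
Proof.
move=> rsN; case: N / rsN S E G => S E G ES GS rankEG S'a.
have EG_unit : col_mx E G \in unitmx by rewrite -row_full_unit /row_full rankEG.
have -> : S = invmx (col_mx E G) *m block_mx (a%:M : 'M_r) 0 0 S' *m col_mx E G.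
  rewrite -mulmxA mul_block_col !mul0mx addr0 add0r mul_scalar_mx -ES -GS.
  by rewrite -mul_col_mx mulKmx.
rewrite char_poly_conj // {1}/char_poly char_block_diag_mx det_ublock.
rewrite -/(char_poly (a%:M : 'M_r)) -/(char_poly S').
rewrite (char_poly_trig (scalar_mx_is_trig _ _)) mupMl //.
under eq_bigr do rewrite mxE eqxx mulr1n.
by rewrite prodr_const card_ord mup_XsubCX eqxx.
Qed.

Section SquaredNorm.
Variable F : realFieldType.

Definition sqnorm k (u : 'rV[F]_k) : F := (u *m u^T) 0 0.

Definition qform k (M : 'M[F]_k) (u : 'rV[F]_k) : F := (u *m M *m u^T) 0 0.

Lemma sqnormE k (u : 'rV[F]_k) : sqnorm u = \sum_j u 0 j ^+ 2.
Proof. by rewrite /sqnorm !mxE; apply: eq_bigr => j _; rewrite mxE expr2. Qed.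

Lemma sqnorm_ge0 k (u : 'rV[F]_k) : 0 <= sqnorm u.
Proof. by rewrite sqnormE; apply: sumr_ge0 => j _; apply: sqr_ge0. Qed.

Lemma sqnorm_eq0 k (u : 'rV[F]_k) : (sqnorm u == 0) = (u == 0).
Proof.
apply/eqP/eqP => [u0|->]; last by rewrite /sqnorm mul0mx mxE.
apply/rowP => j; rewrite mxE; apply/eqP; rewrite -sqrf_eq0; apply/eqP.
move: u0; rewrite sqnormE => /psumr_eq0P; apply=> // i _; exact: sqr_ge0.
Qed.

Lemma sqnorm_gt0 k (u : 'rV[F]_k) : (0 < sqnorm u) = (u != 0).
Proof. by rewrite lt_def sqnorm_ge0 sqnorm_eq0 andbT. Qed.

Lemma qform_eigen k (M : 'M[F]_k) (u : 'rV[F]_k) (a : F) :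
  u *m M = a *: u -> qform M u = a * sqnorm u.
Proof. by rewrite /qform => ->; rewrite -scalemxAl mxE. Qed.

Lemma submx_ortho_eq0 r k (E : 'M[F]_(r, k)) (v : 'rV_k) :
  (v <= E)%MS -> v *m E^T = 0 -> v = 0.
Proof.
move=> /submxP [w ->] vE0; apply/eqP; rewrite -sqnorm_eq0 /sqnorm.
by rewrite trmx_mul mulmxA vE0 mul0mx mxE.
Qed.

(* The orthogonal complement of the eigenspace is [S]-stable and meets it
   trivially. *)
Lemma mup_char_poly_sym k (S : 'M[F]_k) (a : F) :
  S^T = S -> mup a (char_poly S) = \rank (eigenspace S a).
Proof.
move=> S_sym.
set E := row_base (eigenspace S a); set K := kermx E^T; set G := row_base K.
have ES : E *m S = a *: E by apply/eigenspaceP; rewrite eq_row_base.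
have SEt : S *m E^T = a *: E^T.
  by have := congr1 trmx ES; rewrite trmx_mul S_sym linearZ.
have GEt : G *m E^T = 0 by apply/sub_kermxP; rewrite eq_row_base.
have GS_sub : (G *m S <= G)%MS.
  rewrite eq_row_base; apply/sub_kermxP.
  by rewrite -mulmxA SEt -scalemxAr GEt scaler0.
have EG_disj (v : 'rV_k) : (v <= E)%MS -> (v <= G)%MS -> v = 0.
  move=> vE vG; apply: (submx_ortho_eq0 vE); apply/sub_kermxP.
  by rewrite -/K -(eq_row_base K).
have capEG : (E :&: G)%MS = 0.
  apply/eqP; rewrite -submx0; apply/row_subP => i.
  rewrite (EG_disj (row i (E :&: G)%MS)) ?sub0mx //;
    by apply: submx_trans (row_sub _ _) _; rewrite ?capmxSl ?capmxSr.
have rankE : \rank E = \rank (eigenspace S a) by apply/eqP; apply: row_base_free.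
have rankG : \rank G = \rank K by apply/eqP; apply: row_base_free.
have rank_sum : (\rank (eigenspace S a) + \rank K)%N = k.
  by rewrite /K mxrank_ker mxrank_tr rankE subnKC // rank_leq_col.
apply: (mup_char_poly_block rank_sum ES (esym (mulmxKpV GS_sub))).
  by rewrite -addsmxE mxrank_disjoint_sum // rankE rankG.
rewrite -eigenvalue_root_char; apply/eigenvalueP => -[u uS u_nz].
have uGE : (u *m G <= E)%MS.
  rewrite eq_row_base; apply/eigenspaceP.
  by rewrite -mulmxA -{1}(mulmxKpV GS_sub) mulmxA uS scalemxAl.
have /eqP := EG_disj _ uGE (submxMl _ _).
by rewrite mulmx_free_eq0 ?row_base_free // (negPf u_nz).
Qed.

Lemma sqnorm_subr_le k (x y : 'rV[F]_k) :
  sqnorm (x - y) <= 2 * (sqnorm x + sqnorm y).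
Proof.
rewrite !sqnormE -big_split mulr_sumr /=; apply: ler_sum => j _.
rewrite !mxE; have := sqr_ge0 (x 0 j + y 0 j); rewrite !expr2; nra.
Qed.

Lemma bessel_ineq r k (D : 'M[F]_(r, k)) (z : 'rV_k) :
  D *m D^T = 1%:M -> sqnorm (z *m D^T) <= sqnorm z.
Proof.
move=> D_orth; set u := z *m D^T.
have residual : (z - u *m D) *m (z - u *m D)^T = z *m z^T - u *m u^T.
  rewrite linearB /= trmx_mul mulmxBl !mulmxBr.
  have -> : z *m (D^T *m u^T) = u *m u^T by rewrite mulmxA.
  have -> : u *m D *m z^T = u *m u^T by rewrite -mulmxA /u trmx_mul trmxK.
  have -> : u *m D *m (D^T *m u^T) = u *m u^T.
    by rewrite -mulmxA (mulmxA D) D_orth mul1mx.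
  by rewrite subrr subr0.
have := sqnorm_ge0 (z - u *m D).
by rewrite /sqnorm residual mxE [X in _ + X]mxE subr_ge0.
Qed.

End SquaredNorm.

Lemma sum_mxtens_index (V : nmodType) a b (f : 'I_(a * b) -> V) :
  \sum_q f q = \sum_(i < a) \sum_(l < b) f (mxtens_index (i, l)).
Proof.
rewrite pair_big /= (reindex (@mxtens_index a b)) /=; first by apply: eq_bigr => -[].
by exists (@mxtens_unindex a b) => q _; rewrite ?mxtens_indexK ?mxtens_unindexK.
Qed.

Lemma tensmxZl (R : comPzRingType) a b c f (x : R) (A : 'M[R]_(a, b)) (B : 'M_(c, f)) :
  (x *: A) *t B = x *: (A *t B).
Proof. by apply/matrixP => i j; rewrite !mxE mulrA. Qed.

Lemma tensmxZr (R : comPzRingType) a b c f (x : R) (A : 'M[R]_(a, b)) (B : 'M_(c, f)) :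
  A *t (x *: B) = x *: (A *t B).
Proof. by apply/matrixP => i j; rewrite !mxE mulrCA. Qed.

Lemma tensmx11 (R : comPzRingType) a b :
  (1%:M : 'M[R]_a) *t (1%:M : 'M[R]_b) = 1%:M.
Proof.
apply/matrixP => i j.
case: (mxtens_indexP i) => i1 i2; case: (mxtens_indexP j) => j1 j2.
rewrite tensmxE !mxE (inj_eq (can_inj (@mxtens_indexK a b))) xpair_eqE.
by rewrite -mulnb natrM.
Qed.

Lemma ler_frac1D (R : realFieldType) (x y : R) :
  0 <= x -> x <= y -> x / (1 + x) <= y / (1 + y).
Proof.
move=> x_ge0 xy.
have x1_gt0 : 0 < 1 + x by lra.
have y1_gt0 : 0 < 1 + y by lra.
by rewrite ler_pdivrMr // mulrAC ler_pdivlMr //; nra.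
Qed.

Section MetropolisIteration.
Variables (R : realType) (m n d : nat) (e : 'I_d -> 'I_m * 'I_m) (p : 'I_d -> nat).
Variables (C : forall k : 'I_d, 'M[R]_(p k, n)) (g : pred 'I_d).

Local Notation J := (@span_incidence R m d e g).
Local Notation w := (@metropolis_w R m d e g).
Local Notation deg := (nbr_count e g).
Local Notation A := (A_mx e g C).

Definition Ymx k : 'M[R]_(m * n, 1 * p k) := col k J *t (C k)^T.

Definition Lmx : 'M[R]_(m * n) :=
  (J *t (1%:M : 'M_n)) *m Lambda_mx e g C *m (J *t (1%:M : 'M_n))^T.

Lemma A_mxE : A = 1%:M - (1 / 2) *: Lmx.
Proof. by []. Qed.

Lemma Lmx_sum : Lmx = \sum_k w k *: (Ymx k *m (Ymx k)^T).
Proof.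
rewrite /Lmx /Lambda_mx mulmx_sumr mulmx_suml; apply: eq_bigr => k _.
rewrite trmx_tens trmx1 !tensmx_mul mulmx1 mul1mx.
rewrite /Ymx trmx_tens trmxK tensmx_mul tensmxZr; congr (_ *: (_ *t _)).
by rewrite colE trmx_mul trmx_delta !mulmxA -(mulmxA J (delta_mx k 0)) mul_delta_mx.
Qed.

Lemma qform_Lmx (v : 'rV[R]_(m * n)) :
  qform Lmx v = \sum_k w k * sqnorm (v *m Ymx k).
Proof.
rewrite /qform Lmx_sum mulmx_sumr mulmx_suml summxE; apply: eq_bigr => k _.
by rewrite -scalemxAr -scalemxAl mxE /sqnorm trmx_mul !mulmxA.
Qed.

Lemma Lmx_sym : Lmx^T = Lmx.
Proof.
by rewrite Lmx_sum linear_sum; apply: eq_bigr => k _; rewrite linearZ /= trmx_mul trmxK.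
Qed.

Lemma A_mx_sym : A^T = A.
Proof. by rewrite A_mxE linearB /= linearZ /= trmx1 Lmx_sym. Qed.

Lemma qform_A (v : 'rV[R]_(m * n)) : qform A v = sqnorm v - 1 / 2 * qform Lmx v.
Proof.
rewrite /qform A_mxE mulmxBr mulmx1 -scalemxAr mulmxBl -scalemxAl.
by rewrite [LHS]mxE [X in _ + X]mxE [X in - X]mxE.
Qed.

Lemma metropolis_w_ge0 k : 0 <= w k.
Proof. by rewrite /metropolis_w; case: (g k) => //; rewrite div1r invr_ge0 addr_ge0. Qed.

Lemma metropolis_w_gt0 k : g k -> 0 < w k.
Proof. by rewrite /metropolis_w => ->; rewrite div1r invr_gt0 ltr_wpDr. Qed.

Lemma qform_Lmx_ge0 (v : 'rV[R]_(m * n)) : 0 <= qform Lmx v.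
Proof.
rewrite qform_Lmx; apply: sumr_ge0 => k _.
exact: mulr_ge0 (metropolis_w_ge0 k) (sqnorm_ge0 _).
Qed.

Hypothesis e_noloop : forall k, (e k).1 != (e k).2.

Lemma sum_incidence_col k (f : 'I_m -> R) : g k ->
  \sum_i J i k * f i = f (e k).2 - f (e k).1.
Proof.
move=> gk; rewrite (bigD1 (e k).2) //= (bigD1 (e k).1) /=; last by rewrite e_noloop.
rewrite big1 ?addr0 => [|i /andP [ih it]]; rewrite !mxE gk.
  by rewrite eqxx (negPf (e_noloop k)) eqxx mul1r mulN1r.
by rewrite (negPf ih) (negPf it) mul0r.
Qed.

Definition vblock (v : 'rV[R]_(m * n)) i : 'cV[R]_n := \col_l v 0 (mxtens_index (i, l)).

Lemma sqnorm_vblocks (v : 'rV[R]_(m * n)) : sqnorm v = \sum_i sqnorm (vblock v i)^T.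
Proof.
rewrite sqnormE sum_mxtens_index; apply: eq_bigr => i _.
by rewrite sqnormE; apply: eq_bigr => l _; rewrite !mxE.
Qed.

Lemma mulY_entry (v : 'rV[R]_(m * n)) k r : g k ->
  (v *m Ymx k) 0 (mxtens_index (0, r)) =
  (C k *m (vblock v (e k).2 - vblock v (e k).1)) r 0.
Proof.
move=> gk; rewrite !mxE sum_mxtens_index exchange_big /=; apply: eq_bigr => l _.
transitivity (C k r l * \sum_i J i k * v 0 (mxtens_index (i, l))).
  by rewrite mulr_sumr; apply: eq_bigr => i _; rewrite tensmxE !mxE; ring.
by rewrite sum_incidence_col // !mxE.
Qed.

Hypothesis C_orth : forall k, C k *m (C k)^T = 1%:M.

Lemma sqnorm_mulY_le (v : 'rV[R]_(m * n)) k : g k ->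
  sqnorm (v *m Ymx k) <=
  2 * (sqnorm (vblock v (e k).2)^T + sqnorm (vblock v (e k).1)^T).
Proof.
move=> gk; set x := vblock v _; set y := vblock v _.
have -> : sqnorm (v *m Ymx k) = sqnorm ((x - y)^T *m (C k)^T).
  rewrite !sqnormE sum_mxtens_index big_ord1; apply: eq_bigr => r _.
  by rewrite mulY_entry // -trmx_mul [X in _ = X ^+ 2]mxE.
apply: le_trans (bessel_ineq _ (C_orth k)) _.
by rewrite linearB; apply: sqnorm_subr_le.
Qed.

Lemma metropolis_w_le k u :
  (deg u <= maxn (deg (e k).2) (deg (e k).1))%N -> w k <= (1 + (deg u)%:R)^-1.
Proof.
rewrite /metropolis_w; case: (g k) => [deg_u|]; last by rewrite invr_ge0 addr_ge0.
by rewrite div1r lef_pV2 ?posrE ?ltr_wpDr // lerD2l ler_nat.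
Qed.

Lemma deg_le i : (deg i <= m)%N.
Proof. by rewrite /nbr_count; apply: leq_trans (max_card _) _; rewrite card_ord. Qed.

Lemma card_arcs_le_deg (X Y : 'I_d -> 'I_m) i :
  (forall k, g k -> X k = i -> [exists k', g k' && (e k' == (Y k, i))]) ->
  {in [pred k | g k && (X k == i)] &, injective Y} ->
  (#|[pred k | g k && (X k == i)]| <= deg i)%N.
Proof.
move=> Y_nbr Y_inj; rewrite -(card_in_imset Y_inj); apply: subset_leq_card.
by apply/subsetP => _ /imsetP [k /andP [gk /eqP Xk] ->]; rewrite inE Y_nbr.
Qed.

Lemma sum_metropolis_w_le (X : 'I_d -> 'I_m) i :
  (forall k, g k -> X k = i -> w k <= (1 + (deg i)%:R)^-1) ->
  (#|[pred k | g k && (X k == i)]| <= deg i)%N ->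
  \sum_(k | X k == i) w k <= m%:R / (1 + m%:R).
Proof.
move=> w_le card_le; rewrite (bigID g) /= [X in _ + X]big1 ?addr0; last first.
  by move=> k /andP [_ /negPf gk]; rewrite /metropolis_w gk.
apply: le_trans (_ : \sum_(k | (X k == i) && g k) (1 + (deg i)%:R)^-1 <= _).
  by apply: ler_sum => k /andP [/eqP Xk gk]; apply: w_le.
rewrite (eq_bigl (fun k => k \in [pred k | g k && (X k == i)])) => [|k]; last first.
  by rewrite !inE andbC.
rewrite sumr_const -[_ *+ _]mulr_natl.
apply: le_trans (_ : (deg i)%:R / (1 + (deg i)%:R) <= _).
  by apply: ler_wpM2r; rewrite ?invr_ge0 ?addr_ge0 ?ler_nat.
by apply: ler_frac1D; rewrite ?ler_nat ?deg_le.
Qed.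

Hypothesis e_inj : injective e.
Hypothesis N_sym : forall k, exists k', e k' = ((e k).2, (e k).1).
Hypothesis G_sym : forall k k', g k -> e k' = ((e k).2, (e k).1) -> g k'.

Lemma sum_metropolis_w_head_le i : \sum_(k | (e k).2 == i) w k <= m%:R / (1 + m%:R).
Proof.
apply: sum_metropolis_w_le => [k _ <-|]; first by apply: metropolis_w_le; rewrite leq_maxl.
apply: (@card_arcs_le_deg _ (fun k => (e k).1)) => [k gk <-|k1 k2].
  by apply/existsP; exists k; rewrite gk; case: (e k) => u v; rewrite eqxx.
rewrite !inE => /andP [_ /eqP h1] /andP [_ /eqP h2] t12; apply: e_inj.
by rewrite [e k1]surjective_pairing [e k2]surjective_pairing t12 h1 h2.
Qed.

(* An arc leaving [i] is reversed into an arc of [G] entering [i]. *)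
Lemma sum_metropolis_w_tail_le i : \sum_(k | (e k).1 == i) w k <= m%:R / (1 + m%:R).
Proof.
apply: sum_metropolis_w_le => [k _ <-|]; first by apply: metropolis_w_le; rewrite leq_maxr.
apply: (@card_arcs_le_deg _ (fun k => (e k).2)) => [k gk <-|k1 k2].
  have [k' ek'] := N_sym k; apply/existsP; exists k'.
  by rewrite (G_sym gk ek') ek' eqxx.
rewrite !inE => /andP [_ /eqP h1] /andP [_ /eqP h2] h12; apply: e_inj.
by rewrite [e k1]surjective_pairing [e k2]surjective_pairing h12 h1 h2.
Qed.

Lemma sum_weighted_vblock_le (v : 'rV[R]_(m * n)) (X : 'I_d -> 'I_m) (q : R) :
  (forall i, \sum_(k | X k == i) w k <= q) ->
  \sum_k w k * sqnorm (vblock v (X k))^T <= q * sqnorm v.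
Proof.
move=> w_le; rewrite sqnorm_vblocks (partition_big X xpredT) //= mulr_sumr.
apply: ler_sum => i _.
have -> : \sum_(k | X k == i) w k * sqnorm (vblock v (X k))^T =
    (\sum_(k | X k == i) w k) * sqnorm (vblock v i)^T.
  by rewrite mulr_suml; apply: eq_bigr => k /eqP ->.
by apply: ler_wpM2r; rewrite ?sqnorm_ge0.
Qed.

Lemma qform_Lmx_le (v : 'rV[R]_(m * n)) :
  qform Lmx v <= 4 * (m%:R / (1 + m%:R)) * sqnorm v.
Proof.
have /= head := sum_weighted_vblock_le v sum_metropolis_w_head_le.
have /= tail := sum_weighted_vblock_le v sum_metropolis_w_tail_le.
rewrite qform_Lmx; apply: le_trans (_ : \sum_k w k *
    (2 * (sqnorm (vblock v (e k).2)^T + sqnorm (vblock v (e k).1)^T)) <= _).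
  apply: ler_sum => k _; case gk: (g k); last by rewrite /metropolis_w gk !mul0r.
  by rewrite ler_wpM2l ?metropolis_w_ge0 ?sqnorm_mulY_le.
under eq_bigr do rewrite mulrCA mulrDr.
rewrite -mulr_sumr big_split /=; lra.
Qed.

Lemma eigenvalue_A_bound a : eigenvalue A a -> -1 < a <= 1.
Proof.
case/eigenvalueP => v vA v_nz.
have := qform_A v; rewrite (qform_eigen vA) => qA.
have v_gt0 : 0 < sqnorm v by rewrite sqnorm_gt0.
have q_lt1 : m%:R / (1 + m%:R) < 1 :> R.
  by rewrite ltr_pdivrMr ?mul1r ?ltrDr ?ltr01 // ltr_wpDr ?ler0n.
have q_ge0 : 0 <= m%:R / (1 + m%:R) :> R by rewrite divr_ge0 ?addr_ge0.
have := qform_Lmx_le v; have := qform_Lmx_ge0 v.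
set q := m%:R / (1 + m%:R) in q_lt1 q_ge0 *; set N := sqnorm v in qA v_gt0 *.
set Q := qform Lmx v in qA *; move=> Q_ge0 Q_le.
by apply/andP; split; nra.
Qed.

Hypothesis G_full : forall k, g k.

Definition consensus_mx : 'M[R]_(1 * n, m * n) := const_mx 1 *t 1%:M.

Lemma consensus_mulY k : consensus_mx *m Ymx k = 0.
Proof.
rewrite /consensus_mx /Ymx tensmx_mul.
suff -> : (const_mx 1 : 'rV_m) *m col k J = 0 by rewrite tens0mx.
apply/matrixP => i j; rewrite !mxE.
transitivity (\sum_l J l k * (fun=> 1 : R) l).
  by apply: eq_bigr => l _; rewrite !mxE mul1r mulr1.
by rewrite sum_incidence_col ?subrr.
Qed.

Lemma consensus_sub_eigenspace : (consensus_mx <= eigenspace A 1)%MS.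
Proof.
apply/eigenspaceP; rewrite scale1r A_mxE mulmxBr mulmx1 -scalemxAr Lmx_sum.
rewrite mulmx_sumr big1 ?scaler0 ?subr0 // => k _.
by rewrite -scalemxAr mulmxA consensus_mulY mul0mx scaler0.
Qed.

Lemma eigenspace1_mulY (v : 'rV[R]_(m * n)) : v *m A = v -> forall k, v *m Ymx k = 0.
Proof.
move=> vA k; apply/eqP; rewrite -sqnorm_eq0.
have : qform Lmx v = 0.
  have := qform_A v; rewrite (@qform_eigen _ _ _ _ 1) ?scale1r //; lra.
rewrite qform_Lmx => /psumr_eq0P Lv0.
have /eqP := Lv0 (fun k _ => mulr_ge0 (metropolis_w_ge0 k) (sqnorm_ge0 _)) k isT.
by rewrite mulf_eq0 gt_eqF ?metropolis_w_gt0.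
Qed.

Lemma mulY_eq0_agree (v : 'rV[R]_(m * n)) : (forall k, v *m Ymx k = 0) ->
  forall k, C k *m vblock v (e k).2 = C k *m vblock v (e k).1.
Proof.
move=> vY0 k; apply/eqP; rewrite -subr_eq0 -mulmxBr; apply/eqP/matrixP => r j.
by rewrite ord1 -mulY_entry // vY0 !mxE.
Qed.

Lemma consensus_sub (v : 'rV[R]_(m * n)) (i0 : 'I_m) :
  (forall i j, vblock v i = vblock v j) -> (v <= consensus_mx)%MS.
Proof.
move=> v_cons; apply/submxP; exists (\row_q vblock v i0 (mxtens_unindex q).2 0).
apply/rowP => q; case: (mxtens_indexP q) => i l.
rewrite [RHS]mxE sum_mxtens_index big_ord1 (bigD1 l) // big1 ?addr0 => [|l' /andP [_ l'l]].
  by rewrite (v_cons i0 i) tensmxE !mxE mxtens_indexK /= eqxx mul1r mulr1 addr0.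
by rewrite tensmxE !mxE (negPf l'l) mulr0 mulr0.
Qed.

Lemma eigenspace1_sub_consensus : (0 < m)%N -> well_configured e C ->
  (eigenspace A 1 <= consensus_mx)%MS.
Proof.
move=> m_gt0 wc; apply/row_subP => r; set v := row r _.
have vA : v *m A = v by rewrite -[RHS]scale1r; apply/eigenspaceP; apply: row_sub.
apply: (consensus_sub (Ordinal m_gt0)) => i j; apply: (wc (vblock v)).
exact: mulY_eq0_agree (eigenspace1_mulY vA).
Qed.

Lemma rank_consensus_mx : (0 < m)%N -> \rank consensus_mx = n.
Proof.
move=> m_gt0.
have UUt : consensus_mx *m consensus_mx^T = (m%:R : R) *: 1%:M.
  rewrite /consensus_mx trmx_tens trmx1 tensmx_mul mulmx1.
  have -> : (const_mx 1 : 'rV[R]_m) *m (const_mx 1)^T = m%:R *: 1%:M.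
    apply/matrixP => i j; rewrite !ord1 !mxE.
    under eq_bigr do rewrite !mxE mulr1.
    by rewrite sumr_const card_ord eqxx mulr1.
  by rewrite tensmxZl tensmx11.
have UUt_unit : consensus_mx *m consensus_mx^T \in unitmx.
  by rewrite UUt unitmxZ ?unitmx1 // unitfE pnatr_eq0 -lt0n.
suff -> : \rank consensus_mx = (1 * n)%N by rewrite mul1n.
apply/eqP; rewrite eqn_leq rank_leq_row.
by apply: leq_trans (mxrankM_maxl _ consensus_mx^T); rewrite mxrank_unit.
Qed.

Lemma mup1_A : (0 < m)%N -> well_configured e C -> mup 1 (char_poly A) = n.
Proof.
move=> m_gt0 wc; rewrite mup_char_poly_sym ?A_mx_sym //.
rewrite (@eqmx_rank _ _ _ _ _ consensus_mx) ?rank_consensus_mx //.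
by rewrite eigenspace1_sub_consensus ?consensus_sub_eigenspace.
Qed.

End MetropolisIteration.

Theorem lemma8 (R : realType) (m n d : nat)
  (e : 'I_d -> 'I_m * 'I_m) (p : 'I_d -> nat)
  (C : forall k : 'I_d, 'M[R]_(p k, n)) (g : pred 'I_d)
  (e_inj : injective e)
  (e_noloop : forall k, (e k).1 != (e k).2)
  (N_sym : forall k, exists k', e k' = ((e k).2, (e k).1))
  (C_orth : forall k, C k *m (C k)^T = 1%:M)
  (G_sym : forall k k', g k -> e k' = ((e k).2, (e k).1) -> g k') :
  (forall a : R, eigenvalue (A_mx e g C) a -> -1 < a <= 1) /\
  ((0 < m)%N -> well_configured e C ->
    (mup 1 (char_poly (A_mx e predT C)) = n /\
     forall a : R, eigenvalue (A_mx e predT C) a -> a != 1 -> -1 < a < 1)).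
Proof.
have N_bound :=
  eigenvalue_A_bound e_noloop C_orth e_inj N_sym (g := predT) (fun _ _ _ _ => isT).
split=> [|m_gt0 wc]; first exact: eigenvalue_A_bound e_noloop C_orth e_inj N_sym G_sym.
split=> [|a /N_bound /andP [a_gt a_le] a_neq1]; first exact: mup1_A.
by rewrite a_gt lt_neqAle a_neq1 a_le.
Qed.
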